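(* Let $k$ be an odd positive integer and $\mu, n$ positive integers with $2\mu$ and $n$ coprime, and suppose there is an integer $s$ with \[ k^4\mu^4 n^4 - 16k(4\mu^2+n^2) = s^2. \] Then $(k, \mu, n) = (5, 1, 1)$. *)

From Stdlib Require Import ZArith Znumtheory.

(** Put [a = k mu^2] and [b = k n^2], so the left-hand side is [(ab)^2 - 4(16a + 4b)].
    If it is the square [s^2], then [x = (ab - |s|)/2] is a positive integer root of
    [x^2 - ab x + 16a + 4b], the smaller one, so [x <= ab/2].  Hence
    [x ab <= 2(16a + 4b) <= 40 max(a, b)], i.e. [x min(a, b) <= 40], and the root
    equation then bounds [max(a, b)] as well.  This leaves finitely many triples
    [(k, mu, n)], which are checked by computation. *)

From Stdlib Require Import ZArith Lia List.
Open Scope Z_scope.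

Definition disc (k mu n : Z) : Z :=
  k^4 * mu^4 * n^4 - 16 * k * (4 * mu^2 + n^2).

Lemma square_difference_split (A N s : Z) :
  0 < A -> 0 < N -> A * A - s * s = 4 * N ->
  exists x, 0 < x /\ 2 * x <= A /\ x * (A - x) = N.
Proof.
  intros HA HN E.
  assert (E' : A * A - Z.abs s * Z.abs s = 4 * N) by now rewrite Z.abs_square.
  assert (Hs : Z.abs s < A) by nia.
  destruct (Z.Even_or_Odd A) as [[m HAm] | [m HAm]];
    destruct (Z.Even_or_Odd (Z.abs s)) as [[p Hp] | [p Hp]];
    rewrite HAm, Hp in E'.
  1,4: exists (m - p); lia.
  all: exfalso; lia.
Qed.

Section SmallerRoot.

Variables a b x : Z.
Hypotheses (Ha : 0 < a) (Hb : 0 < b) (Hx : 0 < x) (Hsmall : 2 * x <= a * b).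
Hypothesis Hroot : x * (a * b - x) = 16 * a + 4 * b.

Lemma smaller_root_min_bound : x * Z.min a b <= 40.
Proof.
  assert (Hsum : x * (a * b) <= 32 * a + 8 * b) by nia.
  destruct (Z.min_spec a b) as [[Hab_lt ->] | [Hba_le ->]].
  - assert ((x * a - 40) * b <= 0) by nia; nia.
  - assert ((x * b - 40) * a <= 0) by nia; nia.
Qed.

Lemma smaller_root_max_bound : Z.max a b <= x * x + 16 * Z.min a b.
Proof.
  destruct (Z.max_spec a b) as [[Hab_lt ->] | [Hba_le ->]].
  - rewrite Z.min_l by lia.
    assert (b * (x * a - 4) = x * x + 16 * a) by nia.
    assert (0 < x * a - 4) by nia.
    nia.
  - rewrite Z.min_r by lia.
    assert (a * (x * b - 16) = x * x + 4 * b) by nia.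
    assert (0 < x * b - 16) by nia.
    nia.
Qed.

End SmallerRoot.

Lemma disc_square_bounds (k mu n s : Z) :
  0 < k -> 0 < mu -> 0 < n -> disc k mu n = s^2 ->
  k <= 40 /\ mu <= 47 /\ n <= 47.
Proof.
  intros Hk Hmu Hn E.
  assert (Hmu2 : 1 <= mu * mu) by nia.
  assert (Hn2 : 1 <= n * n) by nia.
  set (a := k * (mu * mu)); set (b := k * (n * n)).
  assert (Hka : k <= a) by (subst a; nia).
  assert (Hkb : k <= b) by (subst b; nia).
  assert (Hmua : mu * mu <= a) by (subst a; nia).
  assert (Hnb : n * n <= b) by (subst b; nia).
  assert (Hdisc : (a * b) * (a * b) - s * s = 4 * (16 * a + 4 * b)).
  { replace (s * s) with (s ^ 2) by ring; rewrite <- E; unfold disc; subst a b; ring. }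
  destruct (square_difference_split (a * b) (16 * a + 4 * b) s)
    as (x & Hx & Hsmall & Hroot); [nia | lia | exact Hdisc |].
  pose proof (smaller_root_min_bound a b x ltac:(lia) ltac:(lia) Hx Hsmall Hroot) as Hmin.
  pose proof (smaller_root_max_bound a b x ltac:(lia) ltac:(lia) Hx Hsmall Hroot) as Hmax.
  assert (Hkmin : k <= Z.min a b) by lia.
  assert (Hmin40 : Z.min a b <= 40) by (clear - Hx Hmin; nia).
  assert (Hx40 : x <= 40) by (clear - Hkmin Hk Hmin; nia).
  assert (Hxx : x * x <= 1600) by (clear - Hx Hx40; nia).
  assert (Hab : a <= 2240 /\ b <= 2240) by lia.
  split; [lia | split]; apply Z.lt_succ_r, (Z.square_lt_simpl_nonneg _ 48); lia.
Qed.

Definition Zinterval (lo hi : Z) : list Z :=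
  map (fun i => lo + Z.of_nat i) (seq 0 (Z.to_nat (hi - lo + 1))).

Lemma in_Zinterval (lo hi z : Z) : lo <= z <= hi -> In z (Zinterval lo hi).
Proof.
  intros Hz; apply in_map_iff; exists (Z.to_nat (z - lo)).
  split; [lia | apply in_seq; lia].
Qed.

Definition is_squareb (z : Z) : bool := Z.sqrt z * Z.sqrt z =? z.

Lemma is_squareb_square (s : Z) : is_squareb (s^2) = true.
Proof.
  unfold is_squareb.
  rewrite Z.pow_2_r, <- (Z.abs_square s), Z.sqrt_square by apply Z.abs_nonneg.
  apply Z.eqb_refl.
Qed.

Definition solution_trivialb (k mu n : Z) : bool :=
  implb (Z.odd k && (Z.gcd (2 * mu) n =? 1) && is_squareb (disc k mu n))
        ((k =? 5) && (mu =? 1) && (n =? 1)).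

Lemma solution_trivialb_small :
  forallb (fun k => forallb (fun mu => forallb (solution_trivialb k mu)
             (Zinterval 1 47)) (Zinterval 1 47)) (Zinterval 1 40) = true.
Proof. vm_compute; reflexivity. Qed.

Lemma small_disc_square (k mu n s : Z) :
  1 <= k <= 40 -> 1 <= mu <= 47 -> 1 <= n <= 47 ->
  Z.odd k = true -> Z.gcd (2 * mu) n = 1 -> disc k mu n = s^2 ->
  k = 5 /\ mu = 1 /\ n = 1.
Proof.
  intros Hk Hmu Hn Hodd Hg E.
  pose proof solution_trivialb_small as C.
  rewrite forallb_forall in C; specialize (C k (in_Zinterval _ _ _ Hk)).
  rewrite forallb_forall in C; specialize (C mu (in_Zinterval _ _ _ Hmu)).
  rewrite forallb_forall in C; specialize (C n (in_Zinterval _ _ _ Hn)).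
  unfold solution_trivialb in C.
  rewrite Hodd, Hg, E, is_squareb_square, Z.eqb_refl in C.
  simpl in C; rewrite !Bool.andb_true_iff, !Z.eqb_eq in C; tauto.
Qed.

Theorem theorem8 (k mu n : Z) :
  0 < k -> Z.odd k = true -> 0 < mu -> 0 < n ->
  Z.gcd (2 * mu) n = 1 ->
  (exists s : Z, k^4 * mu^4 * n^4 - 16 * k * (4 * mu^2 + n^2) = s^2) ->
  k = 5 /\ mu = 1 /\ n = 1.
Proof.
  intros Hk Hodd Hmu Hn Hg [s E].
  destruct (disc_square_bounds k mu n s Hk Hmu Hn E) as (Bk & Bmu & Bn).
  apply (small_disc_square k mu n s); lia || assumption.
Qed.
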